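(* In Zhu's algebra $A(M(1)^+)$ (writing $\omega$, $J$ for $[\omega]$, $[J]$ and products for $*$), $$(\omega-1)\Bigl(\omega-\frac1{16}\Bigr)\Bigl(\omega-\frac9{16}\Bigr)(J+\omega-4\omega^2)=0.$$
   Context: Let $\mathfrak h=\mathbb C h$ with $\langle h,h\rangle=1$, Heisenberg algebra $[h(m),h(n)]=m\delta_{m+n,0}$. Let $M(1)=\mathbb C[h(-1),h(-2),\dots]\mathbf 1$ be the Heisenberg vertex operator algebra of central charge 1 (vacuum $\mathbf 1$, $Y(h(-1)\mathbf 1,z)=\sum_nh(n)z^{-n-1}$, vertex operators of monomials given by normally ordered products of derivatives of $h(z)$), with conformal vector $\omega=\frac12h(-1)^2\mathbf 1$. Let $\theta$ be the automorphism acting by $(-1)^k$ on monomials $h(-n_1)\cdots h(-n_k)\mathbf 1$ and $M(1)^+$ its fixed-point vertex operator subalgebra. Let $J=h(-1)^4\mathbf 1-2h(-3)h(-1)\mathbf 1+\frac32h(-2)^2\mathbf 1$. Zhu's algebra: for a vertex operator algebra $V$, homogeneous $u$ and $v\in V$ with $Y(u,z)=\sum u_nz^{-n-1}$, set $u*v=\sum_{i\ge0}\binom{\mathrm{wt}(u)}{i}u_{i-1}v$ and $u\circ v=\sum_{i\ge0}\binom{\mathrm{wt}(u)}{i}u_{i-2}v$; $O(V)$ is the span of all $u\circ v$, and $A(V)=V/O(V)$ is an associative algebra (with unit $[\mathbf 1]$) under the product induced by $*$; $[v]=v+O(V)$. *)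

From HB Require Import structures.
From mathcomp Require Import all_boot all_order all_algebra.
From mathcomp Require Import complex.
From mathcomp Require Import Rstruct.
From Stdlib Require Import Rdefinitions.
Set Implicit Arguments. Unset Strict Implicit. Unset Printing Implicit Defensive.
Import Order.TTheory GRing.Theory Num.Theory.
Local Open Scope ring_scope.

Definition CC : fieldType := complex Rdefinitions.R.

Section Heisenberg.
Variable F : fieldType.

(* A monomial h(-k1-1) h(-k2-1) ... h(-kr-1) 1 is encoded by the list
   [:: k1; ...; kr] (order irrelevant: monomials are compared up to
   permutation).  The entry k stands for the creation operator h(-(k+1)). *)
Definition monom := seq nat.
Definition vec := seq (F * monom).

Definition wtm (mu : monom) : nat := sumn (map S mu).

Definition coef (v : vec) (mu : monom) : F :=
  \sum_(p <- v | perm_eq p.2 mu) p.1.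
Definition veq (v w : vec) : Prop := forall mu, coef v mu = coef w mu.

Definition vscale (c : F) (v : vec) : vec := [seq (c * p.1, p.2) | p <- v].
Definition vadd (v w : vec) : vec := v ++ w.
Definition vsub (v w : vec) : vec := v ++ vscale (-1) w.
Definition vsum (s : seq vec) : vec := flatten s.
Definition lin (f : monom -> vec) (v : vec) : vec :=
  flatten [seq vscale p.1 (f p.2) | p <- v].

(* Heisenberg modes h(j) on monomials: [h(m),h(n)] = m delta_{m+n,0},
   h(0) = 0 on M(1), h(j) (j>0) = j d/dh(-j), h(j) (j<0) = multiplication. *)
Definition hmono (j : int) (mu : monom) : vec :=
  match j with
  | Posz 0 => [::]
  | Posz k.+1 =>
      if k \in mu then [:: ((k.+1)%:R * (count_mem k mu)%:R, rem k mu)] else [::]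
  | Negz k => [:: (1, k :: mu)]
  end.
Definition hmode (j : int) (v : vec) : vec := lin (hmono j) v.

Definition gbin (a : int) (k : nat) : F :=
  (\prod_(i < k) (a%:~R - i%:R)) / (k`!)%:R.

(* Modes u_n of Y(u,z) = sum_n u_n z^{-n-1} for a monomial u:
   Y(1,z) = id, and Y(h(-m) w, z) = : (d^{m-1}/(m-1)!) h(z) Y(w,z) : ,
   whose z^{-n-1} coefficient is
     sum_j binom(-j-1, m-1) ( h(j) w_{n-j-m}   if j < 0
                              w_{n-j-m} h(j)   if j >= 0 ).
   Acting on a monomial nu only |j| <= B := wt u + wt nu + |n| + 1
   can contribute, so the sum is truncated there. *)
Fixpoint ymono (mu : monom) (n : int) (nu : monom) {struct mu} : vec :=
  match mu with
  | [::] => if n == -1 then [:: (1, nu)] else [::]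
  | k :: mu' =>
      let B := (wtm mu + wtm nu + absz n + 1)%N in
      flatten [seq let j := (t%:Z - B%:Z) in
                   vscale (gbin (- j - 1) k)
                     (if j < 0 then hmode j (ymono mu' (n - j - (k.+1)%:Z) nu)
                      else lin (ymono mu' (n - j - (k.+1)%:Z)) (hmono j nu))
              | t <- iota 0 (2 * B + 1)]
  end.

Definition ymode (u : vec) (n : int) (v : vec) : vec :=
  lin (fun mu => lin (ymono mu n) v) u.

(* Zhu's products, extended linearly from homogeneous u (each monomial is
   homogeneous of weight wtm) :
   u * v = sum_i binom(wt u, i) u_{i-1} v,  u o v = sum_i binom(wt u,i) u_{i-2} v *)
Definition zstar (u v : vec) : vec :=
  lin (fun mu => vsum [seq vscale ('C(wtm mu, i))%:R (lin (ymono mu (i%:Z - 1)) v)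
                      | i <- iota 0 (wtm mu).+1]) u.
Definition zcirc (u v : vec) : vec :=
  lin (fun mu => vsum [seq vscale ('C(wtm mu, i))%:R (lin (ymono mu (i%:Z - 2)) v)
                      | i <- iota 0 (wtm mu).+1]) u.

(* membership in M(1)^+ (theta-fixed: only even-length monomials) *)
Definition in_plus (v : vec) : Prop := forall p, p \in v -> ~~ odd (size p.2).
Definition homog (v : vec) : Prop := exists d, forall p, p \in v -> wtm p.2 = d.

Definition inO_plus (x : vec) : Prop :=
  exists s : seq (vec * vec),
    (forall p, p \in s -> [/\ homog p.1, in_plus p.1 & in_plus p.2]) /\
    veq x (vsum [seq zcirc p.1 p.2 | p <- s]).

Definition vac : vec := [:: (1, [::])].
Definition omega : vec := [:: (1 / 2%:R, [:: 0%N; 0%N])].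
Definition Jvec : vec :=
  [:: (1, [:: 0%N; 0%N; 0%N; 0%N]); (- 2%:R, [:: 2%N; 0%N]); (3%:R / 2%:R, [:: 1%N; 1%N])].

End Heisenberg.

(* Everything reduces to one explicit identity in M(1): over the rationals, the
   representative of the product equals a linear combination of 61 terms
   c (u o v) with u, v monomials of even length (so u, v lie in M(1)^+ and u is
   homogeneous).  The identity has rational coefficients and is decided by
   computing in Qc.  All structure constants of the modes and of Zhu's products
   are rational, so the embedding Q -> C, applied coefficientwise, commutes with
   them and carries the decomposition over to C. *)

From HB Require Import structures.
From mathcomp Require Import all_boot all_order all_algebra zify complex Rstruct.
From Stdlib Require ZArith.ZArith QArith.QArith QArith.Qcanon Reals.RIneq Reals.Qreals.
Set Implicit Arguments. Unset Strict Implicit. Unset Printing Implicit Defensive.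
Import Order.TTheory GRing.Theory Num.Theory.
Local Open Scope ring_scope.

Section ScalarExtension.
Variables (K L : fieldType) (f : {rmorphism K -> L}).

Definition mapv (v : vec K) : vec L := [seq (f p.1, p.2) | p <- v].

Lemma mapv_cat v w : mapv (v ++ w) = mapv v ++ mapv w.
Proof. exact: map_cat. Qed.

Lemma mapv_flatten ss : mapv (flatten ss) = flatten (map mapv ss).
Proof. exact: map_flatten. Qed.

Lemma mapv_vscale c v : mapv (vscale c v) = vscale (f c) (mapv v).
Proof. by rewrite /mapv /vscale -!map_comp; apply: eq_map => p /=; rewrite rmorphM. Qed.

Lemma mapv_vsub v w : mapv (vsub v w) = vsub (mapv v) (mapv w).
Proof. by rewrite /vsub mapv_cat mapv_vscale rmorphN1. Qed.

Lemma mapv_vadd v w : mapv (vadd v w) = vadd (mapv v) (mapv w).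
Proof. exact: mapv_cat. Qed.

Lemma mapv_lin (g : monom -> vec K) (h : monom -> vec L) v :
  (forall m, mapv (g m) = h m) -> mapv (lin g v) = lin h (mapv v).
Proof.
move=> gh; rewrite /lin mapv_flatten -!map_comp; congr flatten.
by apply: eq_map => p /=; rewrite mapv_vscale gh.
Qed.

Lemma mapv_hmono j mu : mapv (hmono K j mu) = hmono L j mu.
Proof.
case: j => [[|k]|k] //=; last by rewrite rmorph1.
by case: ifP => //= _; rewrite rmorphM !rmorph_nat.
Qed.

Lemma mapv_hmode j v : mapv (hmode j v) = hmode j (mapv v).
Proof. exact/mapv_lin/mapv_hmono. Qed.

Lemma rmorph_gbin a k : f (gbin K a k) = gbin L a k.
Proof.
rewrite /gbin fmorph_div rmorph_prod rmorph_nat; congr (_ / _).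
by apply: eq_bigr => i _; rewrite rmorphB rmorph_int rmorph_nat.
Qed.

Lemma mapv_ymono mu n nu : mapv (ymono K mu n nu) = ymono L mu n nu.
Proof.
elim: mu n nu => [|k mu IH] n nu; cbn [ymono].
  by case: ifP => //= _; rewrite /mapv /= rmorph1.
rewrite mapv_flatten -map_comp; congr flatten; apply: eq_map => t /=.
rewrite mapv_vscale rmorph_gbin; case: ifP => _; first by rewrite mapv_hmode IH.
by rewrite (mapv_lin _ (IH _)) mapv_hmono.
Qed.

Lemma mapv_zstar u v : mapv (zstar u v) = zstar (mapv u) (mapv v).
Proof.
apply: mapv_lin => m; rewrite mapv_flatten -map_comp; congr flatten.
by apply: eq_map => i /=; rewrite mapv_vscale rmorph_nat (mapv_lin _ (mapv_ymono m _)).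
Qed.

Lemma mapv_zcirc u v : mapv (zcirc u v) = zcirc (mapv u) (mapv v).
Proof.
apply: mapv_lin => m; rewrite mapv_flatten -map_comp; congr flatten.
by apply: eq_map => i /=; rewrite mapv_vscale rmorph_nat (mapv_lin _ (mapv_ymono m _)).
Qed.

Lemma coef_mapv v mu : coef (mapv v) mu = f (coef v mu).
Proof. by rewrite /coef big_map rmorph_sum. Qed.

Lemma veq_mapv v w : veq v w -> veq (mapv v) (mapv w).
Proof. by move=> vw mu; rewrite !coef_mapv vw. Qed.

Lemma homog_mapv v : homog v -> homog (mapv v).
Proof. by case=> d hd; exists d => _ /mapP [p pv ->]; exact: hd. Qed.

Lemma in_plus_mapv v : in_plus v -> in_plus (mapv v).
Proof. by move=> hv _ /mapP [p pv ->]; exact: hv. Qed.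

Lemma inO_plus_mapv x : inO_plus x -> inO_plus (mapv x).
Proof.
case=> s [s_in xs]; exists [seq (mapv p.1, mapv p.2) | p <- s]; split.
  move=> _ /mapP [p /s_in [hp1 hp2 hp3] ->] /=.
  by split; [exact: homog_mapv | exact: in_plus_mapv | exact: in_plus_mapv].
move=> mu; rewrite (veq_mapv xs mu) /vsum mapv_flatten -!map_comp.
by congr (coef (flatten _) _); apply: eq_map => p /=; rewrite mapv_zcirc.
Qed.

Lemma mapv_vac : mapv (vac K) = vac L.
Proof. by rewrite /mapv /= rmorph1. Qed.

Lemma mapv_omega : mapv (omega K) = omega L.
Proof. by rewrite /mapv /= fmorph_div rmorph1 rmorph_nat. Qed.

Lemma mapv_Jvec : mapv (Jvec K) = Jvec L.
Proof. by rewrite /mapv /= rmorph1 fmorph_div rmorphN !rmorph_nat. Qed.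

End ScalarExtension.

Section TruncatedModes.
Variable F : fieldType.

(* [\prod] is locked, which would block [vm_compute]. *)
Definition gbin_iter (a : int) (k : nat) : F :=
  foldr (fun i acc => (a%:~R - i%:R) * acc) 1 (iota 0 k) / (k`!)%:R.

Lemma gbinE a k : gbin F a k = gbin_iter a k.
Proof.
rewrite /gbin /gbin_iter -(big_mkord xpredT (fun i => a%:~R - i%:R)).
by rewrite /index_iota subn0; congr (_ / _); elim: (iota 0 k) => [|x s IH]; rewrite ?big_nil ?big_cons ?IH.
Qed.

Definition yterm (rec : int -> monom -> vec F) (k : nat) (n : int) (nu : monom) (j : int) :=
  vscale (gbin_iter (- j - 1) k)
    (if j < 0 then hmode j (rec (n - j - (k.+1)%:Z) nu)
     else lin (rec (n - j - (k.+1)%:Z)) (hmono F j nu)).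

(* [ymono] with the range of [j] cut down to [n - wt mu - wt nu < j <= wt nu]:
   below it the inner mode lowers the weight below zero, above it [h(j)] kills
   [nu].  Without this cut the recursion is too wide to evaluate. *)
Fixpoint ymono_trunc (mu : monom) (n : int) (nu : monom) {struct mu} : vec F :=
  match mu with
  | [::] => if n == -1 then [:: (1, nu)] else [::]
  | k :: mu' =>
      let B := (wtm mu + wtm nu + absz n + 1)%N in
      flatten [seq yterm (ymono_trunc mu') k n nu (t%:Z - B%:Z)
              | t <- iota 0 (2 * B + 1) &
                 (n - (wtm mu)%:Z - (wtm nu)%:Z < t%:Z - B%:Z) && (t%:Z - B%:Z <= (wtm nu)%:Z)]
  end.

Lemma wtm_gt_mem (k : nat) (nu : monom) : k \in nu -> (k < wtm nu)%N.
Proof.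
elim: nu => [|x s IH] //=; rewrite inE /wtm /= => /orP [/eqP->|/IH]; first by rewrite ltnS leq_addr.
by move/leq_trans; apply; rewrite leq_addl.
Qed.

Lemma wtm_rem (k : nat) (nu : monom) : k \in nu -> wtm nu = (k.+1 + wtm (rem k nu))%N.
Proof.
elim: nu => [|x s IH] //=; rewrite inE => /orP [/eqP->|ks]; first by rewrite eqxx.
case: eqP => [->//|_]; rewrite /wtm /= -/(wtm s) -/(wtm (rem k s)) (IH ks); lia.
Qed.

Lemma flatten_map_nil (T : Type) (g : nat -> seq T) s :
  {in s, forall t, g t = [::]} -> flatten [seq g t | t <- s] = [::].
Proof. by elim: s => [|x s IH] //= gs; rewrite gs ?mem_head // IH // => t ts; rewrite gs // inE ts orbT. Qed.

Lemma flatten_map_filter (T : Type) (g : nat -> seq T) (P : pred nat) s :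
  {in s, forall t, ~~ P t -> g t = [::]} ->
  flatten [seq g t | t <- s & P t] = flatten [seq g t | t <- s].
Proof.
elim: s => [|x s IH] //= gs.
have {}IH := IH (fun t ts => gs t (mem_behead (ts : t \in behead (x :: s)))).
case: ifP => Px /=; first by rewrite IH.
by rewrite (gs x (mem_head _ _)) ?Px // IH.
Qed.

Lemma yterm_nil (rec : int -> monom -> vec F) k mu n nu j :
  (forall n' nu', (wtm mu)%:Z + (wtm nu')%:Z <= n' -> rec n' nu' = [::]) ->
  [\/ (wtm mu)%:Z + (wtm nu)%:Z + (k.+1)%:Z + j <= n,
      (0 <= j) && ((wtm mu)%:Z + (wtm nu)%:Z + (k.+1)%:Z <= n) |
      (wtm nu)%:Z < j] ->
  yterm rec k n nu j = [::].
Proof.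
move=> rec0 Hj; rewrite /yterm; case: ifP => jneg.
  by rewrite rec0 //; case: Hj => [|/andP[? _]|?]; lia.
have [->//|[k' [jE k'nu ->]]] : hmono F j nu = [::] \/ exists k', [/\ j = (k'.+1)%:Z, k' \in nu &
    hmono F j nu = [:: ((k'.+1)%:R * (count_mem k' nu)%:R, rem k' nu)]].
  case: j jneg {Hj} => [[|k'] |m] //= _; first by left.
  by case: ifP => k'nu; [right; exists k' | left].
rewrite /lin /= rec0 //.
by have := wtm_rem k'nu; have := wtm_gt_mem k'nu; case: Hj => [|/andP[? ?]|?]; lia.
Qed.

Lemma ymono_trunc_wt mu n nu : (wtm mu)%:Z + (wtm nu)%:Z <= n -> ymono_trunc mu n nu = [::].
Proof.
elim: mu n nu => [|k mu IH] n nu Hn; cbn [ymono_trunc].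
  by case: eqP => // n1; rewrite n1 in Hn; lia.
apply: flatten_map_nil => t; rewrite mem_filter => /andP [/andP [Hlo Hhi] _].
apply: yterm_nil; first exact: IH.
by apply: Or32; apply/andP; split; move: Hn Hlo; rewrite /wtm /=; lia.
Qed.

Lemma ymonoE mu n nu : ymono F mu n nu = ymono_trunc mu n nu.
Proof.
elim: mu n nu => [|k mu IH] n nu //; cbn [ymono ymono_trunc].
rewrite flatten_map_filter; last first.
  move=> t _ /nandP Ht; apply: yterm_nil; first exact: ymono_trunc_wt.
  by case: Ht => Ht; [apply: Or31 | apply: Or33]; move: Ht; rewrite /wtm /=; lia.
congr flatten; apply: eq_map => t; rewrite /yterm gbinE.
case: ifP => _; first by rewrite IH.
by congr vscale; rewrite /lin; congr flatten; apply: eq_map => p; rewrite IH.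
Qed.

Definition zstar_trunc (u v : vec F) : vec F :=
  lin (fun mu => vsum [seq vscale ('C(wtm mu, i))%:R (lin (ymono_trunc mu (i%:Z - 1)) v)
                      | i <- iota 0 (wtm mu).+1]) u.
Definition zcirc_trunc (u v : vec F) : vec F :=
  lin (fun mu => vsum [seq vscale ('C(wtm mu, i))%:R (lin (ymono_trunc mu (i%:Z - 2)) v)
                      | i <- iota 0 (wtm mu).+1]) u.

Lemma eq_lin (g h : monom -> vec F) v : g =1 h -> lin g v = lin h v.
Proof. by move=> gh; rewrite /lin; congr flatten; apply: eq_map => p; rewrite gh. Qed.

Lemma zstarE u v : zstar u v = zstar_trunc u v.
Proof.
apply: eq_lin => m; congr flatten; apply: eq_map => i; congr vscale.
by apply: eq_lin => m'; rewrite ymonoE.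
Qed.

Lemma zcircE u v : zcirc u v = zcirc_trunc u v.
Proof.
apply: eq_lin => m; congr flatten; apply: eq_map => i; congr vscale.
by apply: eq_lin => m'; rewrite ymonoE.
Qed.

End TruncatedModes.

Section NormalForm.
Variable F : fieldType.
Implicit Types (u v w : vec F) (g : monom -> F).

Definition wsum v g : F := \sum_(p <- v) p.1 * g p.2.

Definition wequiv v w := forall g, wsum v g = wsum w g.

Lemma coef_wsum v mu : coef v mu = wsum v (fun m => (perm_eq m mu)%:R).
Proof.
rewrite /coef /wsum big_mkcond; apply: eq_bigr => p _.
by case: ifP => _; rewrite ?mulr1 ?mulr0.
Qed.

Lemma wequiv_veq v w : wequiv v w -> veq v w.
Proof. by move=> vw mu; rewrite !coef_wsum vw. Qed.

Lemma wsum_cat v w g : wsum (v ++ w) g = wsum v g + wsum w g.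
Proof. exact: big_cat. Qed.

Lemma wsum_vscale c v g : wsum (vscale c v) g = c * wsum v g.
Proof. by rewrite /wsum big_map mulr_sumr; apply: eq_bigr => p _; rewrite mulrA. Qed.

Lemma wsum_flatten ss g : wsum (flatten ss) g = \sum_(s <- ss) wsum s g.
Proof.
elim: ss => [|s ss IH]; first by rewrite /wsum !big_nil.
by rewrite big_cons /= wsum_cat IH.
Qed.

Lemma wsum_lin h v g : wsum (lin h v) g = wsum v (fun m => wsum (h m) g).
Proof.
rewrite /lin wsum_flatten big_map; apply: eq_bigr => p _.
exact: wsum_vscale.
Qed.

Lemma wsum_zstar_trunc u v g :
  wsum (zstar_trunc u v) g =
  wsum u (fun m => \sum_(i <- iota 0 (wtm m).+1) ('C(wtm m, i))%:R *
                   wsum v (fun m' => wsum (ymono_trunc F m (i%:Z - 1) m') g)).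
Proof.
rewrite wsum_lin; apply: eq_bigr => p _; congr (_ * _).
by rewrite wsum_flatten big_map; apply: eq_bigr => i _; rewrite wsum_vscale wsum_lin.
Qed.

Lemma wequiv_zstar_trunc u u' v v' :
  wequiv u u' -> wequiv v v' -> wequiv (zstar_trunc u v) (zstar_trunc u' v').
Proof.
move=> uu' vv' g; rewrite !wsum_zstar_trunc uu'.
by apply: eq_bigr => p _; congr (_ * _); apply: eq_bigr => i _; rewrite vv'.
Qed.

Fixpoint insert_term (p : F * monom) v : vec F :=
  match v with
  | [::] => [:: p]
  | q :: v' => if q.2 == p.2 then (q.1 + p.1, q.2) :: v' else q :: insert_term p v'
  end.

Definition collect v : vec F := foldr insert_term [::] v.

(* Monomials are sorted first, so that [collect] merges permuted copies. *)
Definition normal_form v : vec F := collect [seq (p.1, sort leq p.2) | p <- v].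

Lemma wsum_insert_term p v g : wsum (insert_term p v) g = p.1 * g p.2 + wsum v g.
Proof.
elim: v => [|q v IH] /=; first by rewrite /wsum big_seq1 big_nil addr0.
case: eqP => [<-|_]; rewrite /wsum !big_cons /= -/(wsum v g).
  by rewrite mulrDl (addrC (q.1 * _)) addrA.
by rewrite -/(wsum (insert_term p v) g) IH addrCA.
Qed.

Lemma wequiv_collect v : wequiv (collect v) v.
Proof. by move=> g; elim: v => [|p v IH] //=; rewrite wsum_insert_term IH /wsum big_cons. Qed.

Lemma wsum_normal_form v g : wsum (normal_form v) g = wsum v (g \o sort leq).
Proof. by rewrite wequiv_collect /wsum big_map. Qed.

Lemma coef_vsub v w mu : coef (vsub v w) mu = coef v mu - coef w mu.
Proof. by rewrite !coef_wsum wsum_cat wsum_vscale mulN1r. Qed.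

Lemma veq_normal_form v w : all (fun p => p.1 == 0) (normal_form (vsub v w)) -> veq v w.
Proof.
move=> /allP nf0 mu; apply/eqP; rewrite -subr_eq0 -coef_vsub coef_wsum.
have -> : wsum (vsub v w) (fun m => (perm_eq m mu)%:R) =
          wsum (normal_form (vsub v w)) (fun m => (perm_eq m mu)%:R).
  by rewrite wsum_normal_form; apply: eq_bigr => p _ /=; rewrite perm_sort.
by rewrite /wsum big_seq big1 // => p /nf0/eqP ->; rewrite mul0r.
Qed.
End NormalForm.

Definition omega_cubic (K : fieldType) (star : vec K -> vec K -> vec K) : vec K :=
  let w := omega K in let one := vac K in
  star (star (vsub w one) (vsub w (vscale (1 / 16%:R) one))) (vsub w (vscale (9%:R / 16%:R) one)).

Definition J_factor (K : fieldType) (star : vec K -> vec K -> vec K) : vec K :=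
  let w := omega K in vadd (vadd (Jvec K) w) (vscale (- 4%:R) (star w w)).

Lemma omega_cubic_trunc (K : fieldType) : omega_cubic (@zstar K) = omega_cubic (@zstar_trunc K).
Proof. by rewrite /omega_cubic !zstarE. Qed.

Lemma J_factor_trunc (K : fieldType) : J_factor (@zstar K) = J_factor (@zstar_trunc K).
Proof. by rewrite /J_factor zstarE. Qed.

Lemma mapv_omega_cubic (K L : fieldType) (f : {rmorphism K -> L}) :
  mapv f (omega_cubic (@zstar K)) = omega_cubic (@zstar L).
Proof.
by rewrite /omega_cubic !(mapv_zstar, mapv_vsub, mapv_vscale) mapv_omega mapv_vac
  !fmorph_div rmorph1 !rmorph_nat.
Qed.

Lemma mapv_J_factor (K L : fieldType) (f : {rmorphism K -> L}) :
  mapv f (J_factor (@zstar K)) = J_factor (@zstar L).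
Proof.
by rewrite /J_factor !(mapv_vadd, mapv_vscale, mapv_zstar) mapv_Jvec mapv_omega rmorphN rmorph_nat.
Qed.

(* Qc rather than [rat]: the latter computes with unary naturals. *)
Module QcField.
Import Stdlib.ZArith.ZArith Stdlib.QArith.QArith Stdlib.QArith.Qcanon Stdlib.Reals.Rdefinitions Stdlib.Reals.Qreals.
Local Close Scope Q_scope.
Local Close Scope Qc_scope.

Definition Qc_eqb (x y : Qc) : bool := Qeq_bool x y.

Lemma Qc_eqP : Equality.axiom Qc_eqb.
Proof.
move=> x y; apply: (iffP idP) => [/Qeq_bool_iff|->]; first exact: Qc_is_canon.
exact/Qeq_bool_iff/Qeq_refl.
Qed.
HB.instance Definition _ := hasDecEq.Build Qc Qc_eqP.

Definition int_of_Z (z : Z) : int :=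
  match z with Z0 => Posz 0 | Zpos p => Posz (Pos.to_nat p) | Zneg p => Negz (Pos.to_nat p).-1 end.
Definition Z_of_int (i : int) : Z :=
  match i with Posz n => Z.of_nat n | Negz n => Zneg (Pos.of_succ_nat n) end.

Lemma int_of_ZK : cancel int_of_Z Z_of_int.
Proof.
case=> //= p; first by rewrite positive_nat_Z.
have [n Hn] := Pos2Nat.is_succ p; rewrite Hn /=; congr Zneg.
by apply: Pos2Nat.inj; rewrite SuccNat2Pos.id_succ Hn.
Qed.

Definition Qc_encode (q : Qc) : int * nat := (int_of_Z (Qnum q), Pos.to_nat (Qden q)).
Definition Qc_decode (p : int * nat) : option Qc := Some (Q2Qc (Z_of_int p.1 # Pos.of_nat p.2)).

Lemma Qc_encodeK : pcancel Qc_encode Qc_decode.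
Proof.
move=> q; rewrite /Qc_decode /Qc_encode /= int_of_ZK Pos2Nat.id; congr Some.
exact/Qc_is_canon/(Qred_correct (Qnum q # Qden q)).
Qed.
HB.instance Definition _ := PCanIsCountable Qc_encodeK.

Lemma Qc_addNr : left_inverse 0%Qc Qcopp Qcplus.
Proof. by move=> x; rewrite Qcplus_comm Qcplus_opp_r. Qed.
HB.instance Definition _ :=
  GRing.isZmodule.Build Qc Qcplus_assoc Qcplus_comm Qcplus_0_l Qc_addNr.

Lemma Qc_one_neq0 : 1%Qc != 0%Qc. Proof. by []. Qed.
HB.instance Definition _ := GRing.Zmodule_isComNzRing.Build Qc
  Qcmult_assoc Qcmult_comm Qcmult_1_l Qcmult_plus_distr_l Qc_one_neq0.

Lemma Qc_mulVf (x : Qc) : x != 0%Qc -> (/ x * x)%Qc = 1%Qc.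
Proof. by move=> /eqP x0; rewrite Qcmult_comm; exact: Qcmult_inv_r. Qed.
Lemma Qc_inv0 : (/ 0)%Qc = 0%Qc. Proof. exact: Qc_is_canon. Qed.
HB.instance Definition _ := GRing.ComNzRing_isField.Build Qc Qc_mulVf Qc_inv0.

Definition Qc_to_CC (q : Qc) : CC := (Q2R q)%:C%C.

Lemma Q2R_Qred q : Q2R (Qred q) = Q2R q.
Proof. exact/Qeq_eqR/Qred_correct. Qed.

Lemma Qc_to_CC_is_zmod_morphism : zmod_morphism Qc_to_CC.
Proof.
move=> x y; rewrite /Qc_to_CC -rmorphB; congr (_%:C)%C.
by rewrite [LHS]Q2R_Qred Q2R_plus Q2R_Qred Q2R_opp.
Qed.

Lemma Qc_to_CC_is_monoid_morphism : monoid_morphism Qc_to_CC.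
Proof.
split; first by rewrite /Qc_to_CC /Q2R /= RIneq.Rinv_1 Raxioms.Rmult_1_l.
move=> x y; rewrite /Qc_to_CC -rmorphM; congr (_%:C)%C.
by rewrite [LHS]Q2R_Qred Q2R_mult.
Qed.
HB.instance Definition _ := GRing.isZmodMorphism.Build Qc CC Qc_to_CC Qc_to_CC_is_zmod_morphism.
HB.instance Definition _ := GRing.isMonoidMorphism.Build Qc CC Qc_to_CC Qc_to_CC_is_monoid_morphism.

End QcField.

Import QcField Stdlib.QArith.QArith Stdlib.QArith.Qcanon.
Local Close Scope Q_scope.
Local Close Scope Qc_scope.

(* An entry [(c, u, v)] stands for the term [c u o v] of the decomposition. *)
Definition certificate : seq (Q * monom * monom) :=
  ([:: ((-7455 # 1024)%Q, [:: 0; 0], [:: ]);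
     ((-744139439 # 6144)%Q, [:: 1; 0], [:: ]);
     ((-4518269377 # 12288)%Q, [:: 2; 0], [:: ]);
     ((717030395 # 24576)%Q, [:: 1; 1], [:: ]);
     ((-1537119 # 4096)%Q, [:: 0; 0; 0; 0], [:: ]);
     ((-13296466453 # 20480)%Q, [:: 3; 0], [:: ]);
     ((1257221417 # 20480)%Q, [:: 2; 1], [:: ]);
     ((-10386966161 # 15360)%Q, [:: 4; 0], [:: ]);
     ((4271983943 # 30720)%Q, [:: 3; 1], [:: ]);
     ((-1131716377 # 61440)%Q, [:: 2; 2], [:: ]);
     ((-288805951 # 4096)%Q, [:: 1; 0], [:: 0; 0]);
     ((-797641 # 128)%Q, [:: 0; 0], [:: 1; 1]);
     ((-34725 # 128)%Q, [:: 0; 0], [:: 0; 0; 0; 0]);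
     ((175537453 # 4096)%Q, [:: 1; 0; 0; 0], [:: ]);
     ((-290058317 # 672)%Q, [:: 5; 0], [:: ]);
     ((4910959667 # 53760)%Q, [:: 4; 1], [:: ]);
     ((342868957 # 43008)%Q, [:: 3; 2], [:: ]);
     ((61513053 # 2048)%Q, [:: 2; 0], [:: 0; 0]);
     ((-122947991 # 8192)%Q, [:: 1; 1], [:: 0; 0]);
     ((-29963 # 64)%Q, [:: 1; 0], [:: 1; 1]);
     ((3283807 # 2048)%Q, [:: 1; 0], [:: 0; 0; 0; 0]);
     ((-21183 # 4)%Q, [:: 0; 0], [:: 2; 2]);
     ((-7 # 32)%Q, [:: 0; 0], [:: 0; 0; 0; 0; 0; 0]);
     ((-1227691833 # 7168)%Q, [:: 6; 0], [:: ]);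
     ((565068937 # 14336)%Q, [:: 5; 1], [:: ]);
     ((-160021483 # 35840)%Q, [:: 4; 2], [:: ]);
     ((86899081 # 14336)%Q, [:: 3; 3], [:: ]);
     ((-145111545 # 4096)%Q, [:: 0; 0], [:: 3; 0]);
     ((-174547 # 16)%Q, [:: 0; 0], [:: 2; 1]);
     ((-13863037 # 4096)%Q, [:: 0; 0], [:: 1; 0; 0; 0]);
     ((15604087 # 512)%Q, [:: 3; 0], [:: 0; 0]);
     ((5917533 # 1024)%Q, [:: 2; 1], [:: 0; 0]);
     ((-137905703 # 10240)%Q, [:: 0; 0], [:: 4; 0]);
     ((-4970829 # 2048)%Q, [:: 0; 0], [:: 3; 1]);
     ((-5077151 # 2048)%Q, [:: 0; 0], [:: 2; 0; 0; 0]);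
     ((-16989 # 64)%Q, [:: 0; 0], [:: 1; 1; 0; 0]);
     ((-33279 # 32)%Q, [:: 2; 0], [:: 1; 1]);
     ((1923 # 32)%Q, [:: 2; 0], [:: 0; 0; 0; 0]);
     ((3019135 # 4096)%Q, [:: 1; 1], [:: 0; 0; 0; 0]);
     ((-846633 # 64)%Q, [:: 7; 0], [:: ]);
     ((-146823 # 256)%Q, [:: 6; 1], [:: ]);
     ((799195 # 512)%Q, [:: 5; 2], [:: ]);
     ((1050189 # 1024)%Q, [:: 4; 3], [:: ]);
     ((-747 # 2)%Q, [:: 1; 0], [:: 2; 2]);
     ((-3 # 8)%Q, [:: 1; 0], [:: 0; 0; 0; 0; 0; 0]);
     ((-129393 # 64)%Q, [:: 0; 0], [:: 5; 0]);
     ((-735549 # 1024)%Q, [:: 0; 0], [:: 4; 1]);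
     ((-2090115 # 2048)%Q, [:: 0; 0], [:: 3; 2]);
     ((-279 # 1)%Q, [:: 0; 0], [:: 3; 0; 0; 0]);
     ((4467 # 128)%Q, [:: 0; 0], [:: 1; 1; 1; 0]);
     ((9 # 32)%Q, [:: 0; 0], [:: 1; 0; 0; 0; 0; 0]);
     ((73930793 # 5120)%Q, [:: 4; 0], [:: 0; 0]);
     ((769053 # 2048)%Q, [:: 3; 0], [:: 1; 1]);
     ((-513 # 32)%Q, [:: 3; 0], [:: 0; 0; 0; 0]);
     ((855 # 8)%Q, [:: 2; 1], [:: 1; 1]);
     ((3453 # 32)%Q, [:: 2; 1], [:: 0; 0; 0; 0]);
     ((-42849 # 32)%Q, [:: 1; 0], [:: 4; 0]);
     ((-1356669 # 2048)%Q, [:: 1; 0], [:: 3; 1]);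
     ((-6309 # 32)%Q, [:: 1; 0], [:: 2; 0; 0; 0]);
     ((-5619 # 64)%Q, [:: 1; 0], [:: 1; 1; 0; 0]);
     ((38973 # 32)%Q, [:: 5; 0], [:: 0; 0])])%N.

Definition certificate_pairs : seq (vec Qc * vec Qc) :=
  [seq ([:: (Q2Qc c, u)], [:: (1, v)]) | '(c, u, v) <- certificate].

Lemma certificate_even :
  all (fun '(_, u, v) => ~~ odd (size u) && ~~ odd (size v)) certificate.
Proof. by vm_compute. Qed.

Lemma certificate_pairs_admissible p :
  p \in certificate_pairs -> [/\ homog p.1, in_plus p.1 & in_plus p.2].
Proof.
rewrite /certificate_pairs; elim: certificate certificate_even => [|[[c u] v] cs IH] //=.
case/andP => /andP [u_even v_even] /IH {}IH; rewrite inE => /orP [/eqP -> /= | //].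
split; first by exists (wtm u) => q; rewrite inE => /eqP ->.
  by move=> q; rewrite inE => /eqP ->.
by move=> q; rewrite inE => /eqP ->.
Qed.

(* Collecting the factors first only keeps the final product small. *)
Lemma certificate_check :
  all (fun p => p.1 == 0)
    (normal_form (vsub (zstar_trunc (collect (omega_cubic (@zstar_trunc Qc)))
                                    (collect (J_factor (@zstar_trunc Qc))))
                       (vsum [seq zcirc_trunc p.1 p.2 | p <- certificate_pairs]))).
Proof. by vm_compute. Qed.

Lemma inO_plus_Qc : inO_plus (zstar (omega_cubic (@zstar Qc)) (J_factor (@zstar Qc))).
Proof.
exists certificate_pairs; split; first exact: certificate_pairs_admissible.
rewrite zstarE omega_cubic_trunc J_factor_trunc.
under eq_map do rewrite zcircE.
move=> mu; rewrite -(veq_normal_form certificate_check mu).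
apply: wequiv_veq; apply: wequiv_zstar_trunc => g; exact/esym/wequiv_collect.
Qed.

Theorem proposition4p2 :
  let w := omega CC in
  let one := vac CC in
  inO_plus
    (zstar
      (zstar
        (zstar (vsub w one) (vsub w (vscale (1 / 16%:R) one)))
        (vsub w (vscale (9%:R / 16%:R) one)))
      (vadd (vadd (Jvec CC) w) (vscale (- 4%:R) (zstar w w)))).
Proof.
move=> w one; change (inO_plus (zstar (omega_cubic (@zstar CC)) (J_factor (@zstar CC)))).
rewrite -(mapv_omega_cubic Qc_to_CC) -(mapv_J_factor Qc_to_CC) -mapv_zstar.
exact: inO_plus_mapv inO_plus_Qc.
Qed.
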